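(* Let $r\ge1$ and let $a_{-r},\dots,a_0$ be coefficients with $a_{-r}\ne0$ and $|a_0|<1$. Then for every integer $\ell\ge0$ and every $z\in\overline{\mathcal U}$, $\det K_{0,r-1}(z)\neq 0$ and \[ \frac{\det K_{\ell,\ell+r-1}(z)}{\det K_{0,r-1}(z)}=(-1)^{\ell r}\left(\frac{a_{-r}}{a_0-z}\right)^{\ell}. \]
   Context: $\overline{\mathcal U}=\{z\in\mathbb C:|z|\ge1\}$. For $z\in\overline{\mathcal U}$, let $\kappa_1,\dots,\kappa_M$ be the distinct roots of the degree-$r$ equation $z\kappa^r=\sum_{k=-r}^0 a_k\kappa^{r+k}$ in $\kappa$, with multiplicities $\beta_1,\dots,\beta_M$, $\beta_1+\dots+\beta_M=r$. For integers $-r\le i\le j$, $K_{i,j}(z)\in\mathcal M_{j-i+1,r}(\mathbb C)$ is the matrix whose columns, indexed by pairs $(s,q)$ with $1\le s\le M$, $0\le q\le\beta_s-1$ and taken in some fixed order (the same for all $i,j$), are the vectors $(\ell'^{\,q}\kappa_s^{\ell'})_{\ell'=i,\dots,j}$, with the convention $0^0=1$. *)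

From HB Require Import structures.
From mathcomp Require Import all_boot all_order all_algebra.
From mathcomp Require Import reals.
From mathcomp.real_closed Require Import complex.
Set Implicit Arguments. Unset Strict Implicit. Unset Printing Implicit Defensive.
Import Order.TTheory GRing.Theory Num.Theory.
Local Open Scope ring_scope.

(* The polynomial in kappa whose roots are the kappa_s:
   z kappa^r - sum_{k=-r}^0 a_k kappa^{r+k}.
   Coefficients are given as a : int -> C, a k = a_k (only k = -r..0 used). *)
Definition recpoly (C : nzRingType) (r : nat) (a : int -> C) (z : C) : {poly C} :=
  z *: 'X^r - \sum_(k < r.+1) a (- (k%:Z)) *: 'X^(r - k).

(* Canonical list of column indices (kappa_s, q), 0 <= q < beta_s,
   given an enumeration ks of the distinct roots of p. *)
Definition canon_cols (C : fieldType) (p : {poly C}) (ks : seq C) : seq (C * nat) :=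
  flatten [seq [seq (k, q) | q <- iota 0 (mup k p)] | k <- ks].

(* K_{i, i+n-1}: rows indexed by l' = i, ..., i+n-1, columns by cols;
   entry l'^q * kappa^l'. (0^0 = 1 since x ^+ 0 = 1.) *)
Definition Kmat (C : unitRingType) (cols : seq (C * nat)) (i : int) (n : nat)
  : 'M[C]_(n, size cols) :=
  \matrix_(a < n, b < size cols)
    let c := nth (0, 0%N) cols b in
    ((i + a%:Z)%:~R) ^+ c.2 * c.1 ^ (i + a%:Z).

From HB Require Import structures.
From mathcomp Require Import all_boot all_order all_algebra.
From mathcomp Require Import reals.
From mathcomp.real_closed Require Import complex.
From mathcomp Require Import ring.
Set Implicit Arguments. Unset Strict Implicit. Unset Printing Implicit Defensive.
Import Order.TTheory GRing.Theory Num.Theory.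
Local Open Scope ring_scope.

(* Column (x, q) of K_{l, l+r-1} lists the values at x of theta^q X^l', for the
   Euler operator theta f = X f' and l' = l, ..., l+r-1.  Since q is below the
   multiplicity of x as a root of the characteristic polynomial p, these
   functionals kill every multiple of p; hence the rows obey the recurrence of p,
   K_{l+1} = C K_l for the companion matrix C of p, and
   det K_l = (det C)^l det K_0 with det C = (-1)^r a_{-r} / (a_0 - z).
   K_0 is invertible: a nonzero polynomial of degree < r killed by all r
   functionals would vanish to total order r at the (nonzero) roots of p.
   The hypotheses |a_0| < 1 <= |z| are only used to get z != a_0, i.e. deg p = r. *)

Section EulerOperator.
Variable F : numFieldType.
Implicit Types (f g : {poly F}) (x : F).

Definition euler f := 'X * f^`().

Definition euler_eval (c : F * nat) f := (iter c.2 euler f).[c.1].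

Lemma eulerD f g : euler (f + g) = euler f + euler g.
Proof. by rewrite /euler derivD mulrDr. Qed.

Lemma eulerZ c f : euler (c *: f) = c *: euler f.
Proof. by rewrite /euler derivZ scalerAr. Qed.

Lemma eulerXn m : euler 'X^m = m%:R *: 'X^m.
Proof.
rewrite /euler derivXn; case: m => [|m]; first by rewrite mulr0n mulr0 scale0r.
by rewrite mulrnAr -exprS scaler_nat.
Qed.

Lemma euler_iterD q f g : iter q euler (f + g) = iter q euler f + iter q euler g.
Proof. by elim: q => //= q ->; rewrite eulerD. Qed.

Lemma euler_iterZ q c f : iter q euler (c *: f) = c *: iter q euler f.
Proof. by elim: q => //= q ->; rewrite eulerZ. Qed.

Lemma euler_iterXn q m : iter q euler 'X^m = m%:R ^+ q *: 'X^m.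
Proof.
elim: q => [|q /= ->]; first by rewrite scale1r.
by rewrite eulerZ eulerXn scalerA exprSr.
Qed.

Lemma euler_eval_Xn x q m : euler_eval (x, q) 'X^m = m%:R ^+ q * x ^+ m.
Proof. by rewrite /euler_eval euler_iterXn hornerZ hornerXn. Qed.

Lemma euler_eval_sum c n (w : 'I_n -> F) (P : 'I_n -> {poly F}) :
  euler_eval c (\sum_(i < n) w i *: P i) = \sum_(i < n) w i * euler_eval c (P i).
Proof.
rewrite /euler_eval; elim/big_rec2: _ => [|i y f _ <-].
  by rewrite -(scale0r 0) euler_iterZ hornerZ mul0r.
by rewrite euler_iterD euler_iterZ hornerD hornerZ.
Qed.

Lemma euler_iter_XsubC_mul x m j g : (j <= m)%N ->
  exists2 g', iter j euler (('X - x%:P) ^+ m * g) = ('X - x%:P) ^+ (m - j) * g'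
            & g'.[x] = (m ^_ j)%:R * x ^+ j * g.[x].
Proof.
elim: j => [|j IHj] le_jm; first by exists g; rewrite ?subn0 // ffactn0 expr0 !mul1r.
have [g' Eg' g'x] := IHj (ltnW le_jm).
have Ek : (m - j = (m - j.+1).+1)%N by rewrite subnSK.
rewrite Ek in Eg'; set k := (m - j.+1)%N in Eg' Ek *.
exists ('X * (g' *+ k.+1 + ('X - x%:P) * g'^`())).
  by rewrite /= Eg' /euler derivM deriv_exp derivXsubC mul1r exprS; ring.
rewrite hornerM hornerX hornerD hornerMn hornerM hornerXsubC subrr mul0r addr0.
by rewrite g'x ffactnSr -Ek natrM exprS -!mulrnAr; ring.
Qed.

Lemma euler_eval_XsubC_dvd f x q :
  ('X - x%:P) ^+ q.+1 %| f -> euler_eval (x, q) f = 0.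
Proof.
case/dvdpP=> g ->; rewrite /euler_eval /= mulrC.
have [g' -> _] := euler_iter_XsubC_mul x g (leqnSn q).
by rewrite hornerM horner_exp hornerXsubC subrr subSnn expr1 mul0r.
Qed.

Lemma euler_eval_mup f x : f != 0 -> x != 0 -> euler_eval (x, mup x f) f != 0.
Proof.
move=> f_neq0 x_neq0; set m := mup x f.
have /dvdpP[g Ef] : ('X - x%:P) ^+ m %| f by rewrite -mup_geq.
have gx_neq0 : ~~ root g x.
  apply: contraTN (leqnn m) => /factor_theorem[h Eg]; rewrite -ltnNge mup_geq //.
  by rewrite Ef Eg -mulrA -exprS dvdp_mull.
rewrite /euler_eval /= Ef mulrC.
have [g' -> g'x] := euler_iter_XsubC_mul x g (leqnn m).
rewrite subnn expr0 mul1r g'x ffactnn.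
by rewrite !mulf_neq0 ?expf_neq0 // pnatr_eq0 -lt0n fact_gt0.
Qed.

End EulerOperator.

Lemma sum_count_mem (T : eqType) (ks s : seq T) : uniq ks ->
  (\sum_(k <- ks) count_mem k s = count (mem ks) s)%N.
Proof.
move=> ks_uniq; elim: s => [|y s IHs] /=; first by rewrite big1.
rewrite big_split /= IHs -(count_uniq_mem y ks_uniq) -(sum1_count ks) [in RHS]big_mkcond.
by congr (_ + _); apply: eq_bigr => k _; rewrite /= eq_sym; case: (k == y).
Qed.

Section RootMultiplicities.
Variable F : closedFieldType.
Implicit Types (f : {poly F}) (ks : seq F).

Lemma mup_count_mem f : f != 0 ->
  exists2 rs : seq F, size rs = (size f).-1 & forall x, mup x f = count_mem x rs.
Proof.
move=> f_neq0; have [rs Ef] := closed_field_poly_normal f.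
have lc_neq0 : lead_coef f != 0 by rewrite lead_coef_eq0.
exists rs => [|x]; first by rewrite {1}Ef size_scale // size_prod_XsubC.
by rewrite Ef -mul_polyC mupMr ?mu_prod_XsubC // rootC.
Qed.

Lemma sum_mup_leq f ks : f != 0 -> uniq ks ->
  (\sum_(k <- ks) mup k f <= (size f).-1)%N.
Proof.
move=> f_neq0 ks_uniq; have [rs <- mupE] := mup_count_mem f_neq0.
by rewrite (eq_bigr _ (fun k _ => mupE k)) sum_count_mem // count_size.
Qed.

Lemma sum_mup_roots f ks : f != 0 -> uniq ks -> (forall x, root f x -> x \in ks) ->
  (\sum_(k <- ks) mup k f)%N = (size f).-1.
Proof.
move=> f_neq0 ks_uniq rootf_ks; have [rs <- mupE] := mup_count_mem f_neq0.
rewrite (eq_bigr _ (fun k _ => mupE k)) sum_count_mem //.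
apply/eqP; rewrite -all_count; apply/allP => x x_rs; apply: rootf_ks.
by rewrite -dvdp_XsubCl XsubC_dvd // mupE -has_count has_pred1.
Qed.

End RootMultiplicities.

Section Companion.
Variable F : fieldType.

Definition companion n (p : {poly F}) : 'M[F]_n :=
  \matrix_(i, j) if (i.+1 < n)%N then (j == i.+1 :> nat)%:R
                 else - (p`_j / lead_coef p).

Lemma det_companion n p :
  \det (companion n.+1 p) = (-1) ^+ n * - (p`_0 / lead_coef p).
Proof.
rewrite (expand_det_col _ ord0) (bigD1 ord_max) //= big1 ?addr0 => [|i i_neq_max].
  rewrite mxE ltnn /cofactor addn0.
  have -> : row' ord_max (col' ord0 (companion n.+1 p)) = 1%:M.
    apply/matrixP => i j; rewrite !mxE lift_max lift0 /= ltnS ltn_ord eqSS.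
    by rewrite eq_sym.
  by rewrite det1 mulr1 mulrC.
have lt_i_n : (i < n)%N.
  by rewrite ltn_neqAle -ltnS ltn_ord andbT; apply: contra i_neq_max => /eqP i_n;
    apply/eqP/val_inj.
by rewrite mxE ltnS lt_i_n mul0r.
Qed.

End Companion.

Section CharacteristicPolynomial.
Variables (F : fieldType) (r : nat) (a : int -> F) (z : F).

Lemma coef_recpoly j : (recpoly r a z)`_j =
  (if j == r then z else 0) - (if (j <= r)%N then a (- (r - j)%N%:Z) else 0).
Proof.
rewrite /recpoly coefB coefZ coefXn coef_sum mulr_natr mulrb; congr (_ - _).
under eq_bigr => k _ do rewrite coefZ coefXn mulr_natr mulrb.
case: leqP => [le_jr|lt_rj]; last first.
  rewrite big1 // => k _.
  by rewrite ifN // neq_ltn (leq_ltn_trans (leq_subr k r) lt_rj) orbT.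
have lt_rj_r : (r - j < r.+1)%N by rewrite ltnS leq_subr.
rewrite (bigD1 (Ordinal lt_rj_r)) //= subKn // eqxx big1 ?addr0 // => k k_neq.
rewrite ifN //; apply: contra k_neq => /eqP j_eq; apply/eqP/val_inj => /=.
by rewrite j_eq subKn // -ltnS.
Qed.

Hypothesis z_neq_a0 : z != a 0.

Lemma size_recpoly : size (recpoly r a z) = r.+1.
Proof.
apply/eqP; rewrite eqn_leq; apply/andP; split.
  by apply/leq_sizeP => j lt_rj; rewrite coef_recpoly gtn_eqF // leqNgt lt_rj subr0.
rewrite ltnNge; apply/negP => /leq_sizeP/(_ r (leqnn r))/eqP.
by rewrite coef_recpoly eqxx leqnn subnn subr_eq0 (negPf z_neq_a0).
Qed.

Lemma lead_coef_recpoly : lead_coef (recpoly r a z) = z - a 0.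
Proof. by rewrite lead_coefE size_recpoly coef_recpoly eqxx leqnn subnn. Qed.

Lemma det_companion_recpoly : (0 < r)%N -> a (- r%:Z) != 0 ->
  \det (companion r (recpoly r a z)) = (-1) ^+ r * (a (- r%:Z) / (a 0 - z)).
Proof.
move=> r_gt0 ar_neq0; have [n r_eq] : exists n, r = n.+1 by exists r.-1; rewrite prednK.
have := det_companion n (recpoly r a z); rewrite -r_eq => ->.
rewrite lead_coef_recpoly coef_recpoly subn0 r_eq /= exprS.
have za_neq0 : z - a 0 != 0 by rewrite subr_eq0.
have az_neq0 : a 0 - z != 0 by rewrite subr_eq0 eq_sym.
by field; rewrite za_neq0 az_neq0.
Qed.

End CharacteristicPolynomial.

Section ColumnMatrices.
Variable F : numClosedFieldType.

Lemma mem_canon_cols (p : {poly F}) ks x q :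
  ((x, q) \in canon_cols p ks) = (x \in ks) && (q < mup x p)%N.
Proof.
apply/flatten_mapP/andP => [[k k_ks /mapP[q' q'_iota [-> ->]]]|[x_ks lt_q]].
  by rewrite mem_iota add0n in q'_iota.
by exists x => //; apply/mapP; exists q; rewrite ?mem_iota.
Qed.

Lemma size_canon_cols (p : {poly F}) ks :
  size (canon_cols p ks) = (\sum_(k <- ks) mup k p)%N.
Proof.
rewrite size_flatten /shape -map_comp sumnE big_map.
by apply: eq_bigr => k _; rewrite /= size_map size_iota.
Qed.

Lemma KmatE (cols : seq (F * nat)) (l : nat) n i b :
  Kmat cols l%:Z n i b = euler_eval (nth (0, 0%N) cols b) 'X^(l + i).
Proof.
by case E: (nth (0, 0%N) cols b) => [x q]; rewrite mxE E euler_eval_Xn /= -PoszD.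
Qed.

Variables (p : {poly F}) (ks : seq F) (cols : seq (F * nat)).
Hypotheses (p0_neq0 : p`_0 != 0) (ks_uniq : uniq ks)
  (roots_in_ks : forall x, root p x -> x \in ks)
  (colsE : perm_eq cols (canon_cols p ks)).

Let p_neq0 : p != 0.
Proof. by apply: contraNneq p0_neq0 => ->; rewrite coef0. Qed.

Let mem_cols x q : ((x, q) \in cols) = (x \in ks) && (q < mup x p)%N.
Proof. by rewrite (perm_mem colsE) mem_canon_cols. Qed.

Lemma size_cols : size cols = (size p).-1.
Proof. by rewrite (perm_size colsE) size_canon_cols sum_mup_roots. Qed.

Lemma euler_eval_cols c h : c \in cols -> euler_eval c (p * h) = 0.
Proof.
case: c => x q; rewrite mem_cols => /andP[_ lt_q_mup].
by apply: euler_eval_XsubC_dvd; rewrite dvdp_mulr // -mup_geq.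
Qed.

Lemma euler_eval_cols_eq0 (f : {poly F}) : (size f <= size cols)%N ->
  (forall c, c \in cols -> euler_eval c f = 0) -> f = 0.
Proof.
move=> size_f f_cols; apply/eqP/negPn/negP => f_neq0.
have mup_le x : x \in ks -> (mup x p <= mup x f)%N.
  move=> x_ks; rewrite leqNgt; apply/negP => lt_mup.
  have x_neq0 : x != 0.
    apply: contraTneq (leq_ltn_trans (leq0n _) lt_mup) => ->.
    by rewrite -XsubC_dvd // dvdp_XsubCl /root horner_coef0.
  by have /eqP[] := euler_eval_mup f_neq0 x_neq0; rewrite f_cols // mem_cols x_ks.
have le_sum : (\sum_(k <- ks) mup k p <= \sum_(k <- ks) mup k f)%N.
  rewrite big_seq_cond [leqRHS]big_seq_cond.
  by apply: leq_sum => x /andP[x_ks _]; apply: mup_le.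
have f_gt0 : (0 < size f)%N by rewrite size_poly_gt0.
have := leq_trans le_sum (sum_mup_leq f_neq0 ks_uniq).
by rewrite sum_mup_roots // -size_cols -ltnS prednK // ltnNge size_f.
Qed.

Lemma det_Kmat0_neq0 : \det (Kmat cols 0 (size cols)) != 0.
Proof.
apply/negP => /det0P[v v_neq0 vK]; apply: (negP v_neq0).
have vpoly_eq0 : rVpoly v = 0.
  apply: euler_eval_cols_eq0 => [|c c_cols]; first exact: size_poly.
  have lt_c : (index c cols < size cols)%N by rewrite index_mem.
  transitivity ((v *m Kmat cols 0 (size cols)) 0 (Ordinal lt_c)); last by rewrite vK mxE.
  rewrite mxE /rVpoly poly_def euler_eval_sum; apply: eq_bigr => i _.
  by rewrite valK (KmatE 0) add0n nth_index.
by rewrite -[v]rVpolyK vpoly_eq0 linear0.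
Qed.

(* [euler_eval c (p * 'X^l) = 0] solved for its top term. *)
Lemma euler_eval_cols_Xn c l : c \in cols ->
  euler_eval c 'X^(l + size cols) =
  \sum_(j < size cols) - (p`_j / lead_coef p) * euler_eval c 'X^(l + j).
Proof.
move=> c_cols.
have size_p : size p = (size cols).+1 by rewrite size_cols prednK // size_poly_gt0.
have lc_neq0 : p`_(size cols) != 0.
  by rewrite -[size cols]/((size cols).+1.-1) -size_p -lead_coefE lead_coef_eq0.
have p_sum : p = \sum_(j < (size cols).+1) p`_j *: 'X^j.
  by rewrite -size_p -poly_def coefK.
have := euler_eval_cols 'X^l c_cols; rewrite {1}p_sum mulr_suml.
under eq_bigr => j _ do rewrite -scalerAl -exprD addnC.
rewrite euler_eval_sum big_ord_recr /= => /eqP; rewrite addrC addr_eq0 => /eqP E_top.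
rewrite lead_coefE size_p /=; apply: (mulfI lc_neq0); rewrite E_top mulr_sumr -sumrN.
by apply: eq_bigr => j _; field.
Qed.

Lemma Kmat_succ l : Kmat cols l.+1%:Z (size cols) =
  companion (size cols) p *m Kmat cols l%:Z (size cols).
Proof.
apply/matrixP => i b; rewrite KmatE mxE.
under eq_bigr => j _ do rewrite KmatE.
have c_cols : nth (0, 0%N) cols b \in cols by rewrite mem_nth.
have [lt_i|le_n_i] := ltnP i.+1 (size cols).
  rewrite (bigD1 (Ordinal lt_i)) //= big1 => [|j j_neq].
    by rewrite mxE lt_i eqxx mul1r addr0 addSnnS.
  rewrite mxE lt_i; case: eqP => [j_eq|_]; last by rewrite mul0r.
  by case/eqP: j_neq; apply: val_inj.
have i_eq : i.+1 = size cols by apply/anti_leq; rewrite le_n_i ltn_ord.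
rewrite addSnnS i_eq euler_eval_cols_Xn //.
by apply: eq_bigr => j _; rewrite mxE ltnNge le_n_i.
Qed.

Lemma det_Kmat l : \det (Kmat cols l%:Z (size cols)) =
  \det (companion (size cols) p) ^+ l * \det (Kmat cols 0 (size cols)).
Proof.
elim: l => [|l IHl]; first by rewrite expr0 mul1r.
by rewrite Kmat_succ det_mulmx IHl exprS mulrA.
Qed.

End ColumnMatrices.

Theorem lemma3p4 (R : realType) (r : nat) (a : int -> R[i]) :
  (1 <= r)%N -> a (- (r%:Z)) != 0 -> `|a 0| < 1 ->
  forall (l : nat) (z : R[i]), 1 <= `|z| ->
  forall (ks : seq R[i]), uniq ks ->
    (forall x, root (recpoly r a z) x = (x \in ks)) ->
  forall (cols : seq (R[i] * nat)),
    perm_eq cols (canon_cols (recpoly r a z) ks) ->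
    \det (Kmat cols 0 (size cols)) != 0 /\
    \det (Kmat cols l%:Z (size cols)) / \det (Kmat cols 0 (size cols))
      = (-1) ^+ (l * r) * (a (- (r%:Z)) / (a 0 - z)) ^+ l.
Proof.
move=> r_gt0 ar_neq0 a0_lt1 l z z_ge1 ks ks_uniq rootE cols colsE.
have z_neq_a0 : z != a 0.
  by apply/eqP => z_eq; move: (lt_le_trans a0_lt1 z_ge1); rewrite z_eq ltxx.
have p0_neq0 : (recpoly r a z)`_0 != 0.
  by rewrite coef_recpoly ltn_eqF // subn0 sub0r oppr_eq0.
have roots_in_ks x : root (recpoly r a z) x -> x \in ks by rewrite rootE.
have K0_neq0 := det_Kmat0_neq0 p0_neq0 ks_uniq roots_in_ks colsE.
have size_cols_r : size cols = r.
  by rewrite (size_cols p0_neq0 ks_uniq roots_in_ks colsE) size_recpoly.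
split=> //; rewrite (det_Kmat p0_neq0 ks_uniq roots_in_ks colsE) mulfK //.
by rewrite size_cols_r det_companion_recpoly // exprMn -exprM mulnC.
Qed.
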